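(* Let $\sigma_1=\sigma_x,\sigma_2=\sigma_y,\sigma_3=\sigma_z$ be the Pauli matrices. For $\underline{\lambda}=(\lambda_1,\lambda_2,\lambda_3)\in\mathbb{R}^3$ let $U_{\underline{\lambda}}=\exp\{-i\sum_{j=1}^3\lambda_j\,\sigma_j\otimes\sigma_j\}$ act on $\mathbb{C}^2\otimes\mathbb{C}^2$. Let $|\psi_0\rangle$ be any normalized two-qubit pure state and $|\psi_{\underline{\lambda}}\rangle=U_{\underline{\lambda}}|\psi_0\rangle$. Then the Uhlmann curvature (incompatibility) matrix $D$ of the model $\underline{\lambda}\mapsto|\psi_{\underline{\lambda}}\rangle$ vanishes identically: $D_{jk}=0$ for all $j,k\in\{1,2,3\}$, every $\underline{\lambda}$ and every probe $|\psi_0\rangle$.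
   Context: For a pure-state model $\underline{\lambda}\mapsto|\psi_{\underline{\lambda}}\rangle$, with $\partial_j=\partial/\partial\lambda_j$, the Uhlmann curvature matrix is $D_{jk}=4\,\mathrm{Im}\big[\langle\partial_j\psi|\partial_k\psi\rangle-\langle\partial_j\psi|\psi\rangle\langle\psi|\partial_k\psi\rangle\big]$ (equivalently $D_{jk}=-\tfrac{i}{2}\mathrm{Tr}[\rho[L_j,L_k]]$ with $L_j$ the symmetric logarithmic derivatives of $\rho=|\psi_{\underline{\lambda}}\rangle\langle\psi_{\underline{\lambda}}|$). *)

From HB Require Import structures.
From mathcomp Require Import all_boot all_order all_algebra.
From mathcomp Require Import all_classical all_reals.
From mathcomp Require Import topology normedtype sequences derive.
From mathcomp Require Import complex mxtens.
Set Implicit Arguments. Unset Strict Implicit. Unset Printing Implicit Defensive.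
Import Order.TTheory GRing.Theory Num.Theory.
Import numFieldNormedType.Exports.
Local Open Scope ring_scope.

Section Defs.
Variable R : realType.
Local Notation C := (complex R).

Definition cRe (z : C) : R := complex.Re z.
Definition cIm (z : C) : R := complex.Im z.
Definition iC : C := @Complex R 0 1.
Definition cconj (z : C) : C := @Complex R (cRe z) (- cIm z).

Definition sigma_x : 'M[C]_2 := \matrix_(a < 2, b < 2) (if a == b then 0 else 1).
Definition sigma_y : 'M[C]_2 :=
  \matrix_(a < 2, b < 2) (if a == b then 0 else if val a == 0%N then - iC else iC).
Definition sigma_z : 'M[C]_2 :=
  \matrix_(a < 2, b < 2) (if a == b then (if val a == 0%N then 1 else -1) else 0).
Definition pauli (j : 'I_3) : 'M[C]_2 :=
  match val j with 0%N => sigma_x | 1%N => sigma_y | _ => sigma_z end.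

Definition expm n (A : 'M[C]_n) : 'M[C]_n :=
  \matrix_(a, b)
    @Complex R (limn (fun N => \sum_(0 <= k < N) cRe ((A ^+ k) a b / (k`!)%:R)))
            (limn (fun N => \sum_(0 <= k < N) cIm ((A ^+ k) a b / (k`!)%:R))).

Definition Hgen (l : 'rV[R]_3) : 'M[C]_(2 * 2) :=
  \sum_(j < 3) (@Complex R (l 0 j) 0) *: (pauli j *t pauli j).
Definition Ulam (l : 'rV[R]_3) : 'M[C]_(2 * 2) := expm (- iC *: Hgen l).

Definition pderiv (g : 'rV[R]_3 -> R) (l : 'rV[R]_3) (j : 'I_3) : R :=
  derive1 (fun t : R => g (l + t *: delta_mx 0 j)) 0.

Definition cpderiv n (f : 'rV[R]_3 -> 'cV[C]_n) (l : 'rV[R]_3) (j : 'I_3) : 'cV[C]_n :=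
  \col_a @Complex R (pderiv (fun x => cRe (f x a 0)) l j)
                 (pderiv (fun x => cIm (f x a 0)) l j).

Definition braket n (u v : 'cV[C]_n) : C := \sum_a cconj (u a 0) * v a 0.

Definition uhlmannD n (psi : 'rV[R]_3 -> 'cV[C]_n) (l : 'rV[R]_3) (j k : 'I_3) : R :=
  4 * cIm (braket (cpderiv psi l j) (cpderiv psi l k)
          - braket (cpderiv psi l j) (psi l) * braket (psi l) (cpderiv psi l k)).
End Defs.

(* The operators [σ_j ⊗ σ_j] commute and are simultaneously diagonal in the
   Bell basis, with eigenvalues ±1. Hence U_λ = Σ_b e^{-iθ_b(λ)} P_b, where the
   P_b are the Bell projectors and θ(λ) = λ T is linear in λ, and so
   ψ_λ = Σ_b e^{-iθ_b(λ)} v_b with pairwise orthogonal v_b = P_b ψ_0.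
   For such a model ∂_j ψ = Σ_b (-i T_jb) e^{-iθ_b} v_b, hence
   <∂_j ψ|∂_k ψ> = Σ_b T_jb T_kb |v_b|^2 is real, and so is
   <∂_j ψ|ψ><ψ|∂_k ψ> = (i Σ_b T_jb |v_b|^2) (-i Σ_b T_kb |v_b|^2):
   the imaginary part defining the curvature vanishes. *)

From HB Require Import structures.
From mathcomp Require Import all_boot all_order all_algebra.
From mathcomp Require Import all_classical all_reals.
From mathcomp Require Import topology normedtype sequences derive trigo realfun.
From mathcomp Require Import complex mxtens.
From mathcomp Require Import ring.
Set Implicit Arguments. Unset Strict Implicit. Unset Printing Implicit Defensive.
Import Order.TTheory GRing.Theory Num.Theory.
Import numFieldNormedType.Exports.
Local Open Scope complex_scope.
Local Open Scope ring_scope.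

Section Braket.
Variables (R : realType) (n : nat).
Local Notation C := R[i].
Implicit Types (u v : 'cV[C]_n) (z : C).

Lemma conjcE z : z^* = conjc z.
Proof. by []. Qed.

Lemma cconjE z : cconj z = z^*.
Proof. by case: z. Qed.

Lemma braketE u v : braket u v = \sum_a (u a 0)^* * v a 0.
Proof. by apply: eq_bigr => a _; rewrite cconjE. Qed.

Lemma braketZl z u v : braket (z *: u) v = z^* * braket u v.
Proof.
by rewrite !braketE mulr_sumr; apply: eq_bigr => a _; rewrite mxE rmorphM mulrA.
Qed.

Lemma braketZr z u v : braket u (z *: v) = z * braket u v.
Proof.
by rewrite !braketE mulr_sumr; apply: eq_bigr => a _; rewrite mxE mulrCA.
Qed.

Lemma braket_suml m (u : 'I_m -> 'cV[C]_n) v :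
  braket (\sum_b u b) v = \sum_b braket (u b) v.
Proof.
under [RHS]eq_bigr do rewrite braketE.
rewrite braketE exchange_big; apply: eq_bigr => a _.
by rewrite summxE rmorph_sum mulr_suml.
Qed.

Lemma braket_sumr m u (v : 'I_m -> 'cV[C]_n) :
  braket u (\sum_b v b) = \sum_b braket u (v b).
Proof.
under [RHS]eq_bigr do rewrite braketE.
rewrite braketE exchange_big; apply: eq_bigr => a _.
by rewrite summxE mulr_sumr.
Qed.

Lemma braket_self_real v : braket v v \is Num.real.
Proof.
rewrite braketE rpred_sum // => a _.
by rewrite mulrC ger0_real // mulcJ_ge0.
Qed.

Lemma braket_orthogonal_sum m (v : 'I_m -> 'cV[C]_n) (x y : 'I_m -> C) :
  (forall b c, b != c -> braket (v b) (v c) = 0) ->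
  braket (\sum_b x b *: v b) (\sum_b y b *: v b)
  = \sum_b (x b)^* * y b * braket (v b) (v b).
Proof.
move=> v_orth; rewrite braket_suml; apply: eq_bigr => b _.
rewrite braket_sumr (bigD1 b) //= big1 ?addr0 => [|c /negbTE cb].
  by rewrite braketZl braketZr mulrA.
by rewrite braketZl braketZr v_orth ?mulr0 // eq_sym cb.
Qed.

Lemma cIm_real z : z \is Num.real -> cIm z = 0.
Proof. by case: z => a b; rewrite complex_real => /eqP. Qed.

Definition adjmx m (A : 'M[C]_(m, n)) : 'M[C]_(n, m) := (map_mx conjc A)^T.

Lemma braket_mulmxl (A : 'M[C]_n) u v :
  braket (A *m u) v = braket u (adjmx A *m v).
Proof.
rewrite !braketE; under eq_bigr do rewrite mxE rmorph_sum mulr_suml.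
rewrite exchange_big; apply: eq_bigr => a _; rewrite mxE mulr_sumr.
by apply: eq_bigr => c _; rewrite !mxE rmorphM [RHS]mulrCA [RHS]mulrA.
Qed.

End Braket.

Lemma expr_sum_orthogonal_idempotents (K : comPzRingType) n m
    (P : 'I_m -> 'M[K]_n) (z : 'I_m -> K) :
  (forall b, P b *m P b = P b) -> (forall b c, b != c -> P b *m P c = 0) ->
  \sum_b P b = 1%:M ->
  forall k, (\sum_b z b *: P b) ^+ k = \sum_b z b ^+ k *: P b.
Proof.
move=> P_idem P_orth P_sum; elim=> [|k IHk].
  by rewrite expr0; under eq_bigr do rewrite expr0 scale1r.
rewrite exprS IHk -mulmxE mulmx_suml; apply: eq_bigr => b _.
rewrite mulmx_sumr (bigD1 b) //= big1 ?addr0 => [|c cb].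
  by rewrite -scalemxAl -scalemxAr P_idem scalerA exprS.
by rewrite -scalemxAl -scalemxAr P_orth ?scaler0 // eq_sym.
Qed.

Section Phase.
Variable R : realType.
Local Notation C := R[i].
Local Notation Re := (@complex.Re R).
Local Notation Im := (@complex.Im R).
Implicit Types (x d : R) (w : C).

Definition phase x : C := cos x -i* sin x.

Lemma phaseJ_mul x : (phase x)^* * phase x = 1.
Proof.
rewrite /phase; simpc.
by rewrite -!expr2 cos2Dsin2 mulrC addNr.
Qed.

Lemma Re_mul_subi (a b : R) w : Re ((a -i* b) * w) = a * Re w + b * Im w.
Proof. by case: w => c d; simpc. Qed.

Lemma Im_mul_subi (a b : R) w : Im ((a -i* b) * w) = a * Im w - b * Re w.
Proof. by case: w => c d; simpc; rewrite addrC. Qed.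

Lemma Re_mulNiR d w : Re (- 'i * d%:C * w) = d * Im w.
Proof. by case: w => a b; rewrite -complexr0; simpc. Qed.

Lemma Im_mulNiR d w : Im (- 'i * d%:C * w) = - (d * Re w).
Proof. by case: w => a b; rewrite -complexr0; simpc. Qed.

Lemma real_complex_real d : d%:C \is Num.real.
Proof. by rewrite -complexr0 complex_real. Qed.

Lemma mul_i_Ni (w w' : C) : ('i * w) * (- 'i * w') = w * w'.
Proof. by rewrite mulrACA mulrN -expr2 sqrCi opprK mul1r. Qed.

Lemma conj_Ni_real d : (- 'i * d%:C)^* = 'i * d%:C.
Proof. by rewrite -complexr0 conjcE; simpc; rewrite /= opprK. Qed.

Lemma phaseJ_mulr x w : (w * phase x)^* * phase x = w^*.
Proof. by rewrite rmorphM -mulrA phaseJ_mul mulr1. Qed.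

Lemma phaseJ_mull x w : (phase x)^* * (w * phase x) = w.
Proof. by rewrite mulrCA phaseJ_mul mulr1. Qed.

Lemma phaseJ_mul2 x w w' : (w * phase x)^* * (w' * phase x) = w^* * w'.
Proof. by rewrite rmorphM mulrACA phaseJ_mul mulr1. Qed.

Lemma Re_phaseM x w : Re (phase x * w) = cos x * Re w + sin x * Im w.
Proof. exact: Re_mul_subi. Qed.

Lemma Im_phaseM x w : Im (phase x * w) = cos x * Im w - sin x * Re w.
Proof. exact: Im_mul_subi. Qed.

Lemma is_derive_line x d : is_derive (0 : R) 1 (fun t : R => x + t * d) d.
Proof. by apply: is_derive_eq; rewrite add0r mul1r scale0r add0r [d%:A]mulr1. Qed.

Lemma is_derive_cos_line x d :
  is_derive (0 : R) 1 (fun t : R => cos (x + t * d)) (- sin x * d).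
Proof.
have := is_derive1_comp (is_derive_cos _) (is_derive_line x d).
by rewrite /= mul0r addr0.
Qed.

Lemma is_derive_sin_line x d :
  is_derive (0 : R) 1 (fun t : R => sin (x + t * d)) (cos x * d).
Proof.
have := is_derive1_comp (is_derive_sin _) (is_derive_line x d).
by rewrite /= mul0r addr0.
Qed.

Lemma derive1_sum m (h : 'I_m -> R -> R) (dh : 'I_m -> R) :
  (forall b, is_derive (0 : R) 1 (h b) (dh b)) ->
  derive1 (fun t => \sum_b h b t) 0 = \sum_b dh b.
Proof.
move=> h_dh; rewrite derive1E (_ : (fun t => _) = \sum_b h b); last by rewrite fct_sumE.
have sum_dh := is_derive_sum h_dh; exact: derive_val.
Qed.

Lemma is_derive_Re_phaseM x d w :
  is_derive (0 : R) 1 (fun t => Re (phase (x + t * d) * w)) (d * Im (phase x * w)).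
Proof.
under eq_fun do rewrite Re_phaseM.
have dcos := is_derive_cos_line x d; have dsin := is_derive_sin_line x d.
by apply: is_derive_eq; rewrite Im_phaseM !scaler0 !add0r -![_ *: _]/(_ * _); ring.
Qed.

Lemma is_derive_Im_phaseM x d w :
  is_derive (0 : R) 1 (fun t => Im (phase (x + t * d) * w)) (- (d * Re (phase x * w))).
Proof.
under eq_fun do rewrite Im_phaseM.
have dcos := is_derive_cos_line x d; have dsin := is_derive_sin_line x d.
by apply: is_derive_eq; rewrite Re_phaseM !scaler0 !add0r -![_ *: _]/(_ * _); ring.
Qed.

Lemma expNi_coeff x k :
  (- 'i * x%:C) ^+ k / (k`!)%:R = cos_coeff x k -i* sin_coeff x k.
Proof.
rewrite cos_coeffE sin_coeffE /= exprMn -[k in (- 'i) ^+ k]odd_double_half.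
have -> : (odd k)%:R * (-1) ^+ k.-1./2 = (odd k)%:R * (-1) ^+ k./2 :> R.
  by case: (odd k) (odd_double_half k) => [hk|_]; rewrite ?mul0r // -{1}hk add1n half_double.
set m := k./2.
have realE : ((-1) ^+ m / k`!%:R * x ^+ k)%:C = (-1) ^+ m * x%:C ^+ k / k`!%:R :> C.
  by rewrite !rmorphM fmorphV rmorph_nat !rmorphXn rmorphN1 mulrAC.
have expNi2 : (- 'i) ^+ m.*2 = (-1) ^+ m :> C by rewrite -mul2n exprM sqrrN sqr_i.
case: (odd k) => /=.
- rewrite add1n exprS expNi2 -!mulrA [_ * (_ / _)]mulrA -realE -complexr0.
  by rewrite !mul0r mul1r; simpc; rewrite !mulrA.
- by rewrite add0n expNi2 -realE mul1r !mul0r oppr0.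
Qed.

Lemma cvg_sum_cos_sin_series m (x u v : 'I_m -> R) :
  ((fun N => \sum_(0 <= k < N) \sum_b
                (cos_coeff (x b) k * u b + sin_coeff (x b) k * v b))
    @ \oo --> \sum_b (cos (x b) * u b + sin (x b) * v b))%classic.
Proof.
pose S b N := series (cos_coeff (x b)) N * u b + series (sin_coeff (x b)) N * v b.
have -> : (fun N => \sum_(0 <= k < N) \sum_b
                      (cos_coeff (x b) k * u b + sin_coeff (x b) k * v b))
          = fun N => \sum_b S b N.
  apply: funext => N; rewrite exchange_big; apply: eq_bigr => b _.
  by rewrite big_split /= -!mulr_suml.
apply: (@cvg_big _ _ _ _ _ _ _ _ _ S) => [|b _].
  exact: (@pseudometric_normed_Zmodule.add_continuous R R).
apply: cvgD; apply: cvgMr_tmp.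
- by rewrite cos.unlock; exact: is_cvg_series_cos_coeff.
- by rewrite sin.unlock; exact: is_cvg_series_sin_coeff.
Qed.

Lemma Re_sum m (z : 'I_m -> C) : Re (\sum_b z b) = \sum_b Re (z b).
Proof. exact: (raddf_sum (@complex.Re R : Rcomplex R -> R)). Qed.

Lemma Im_sum m (z : 'I_m -> C) : Im (\sum_b z b) = \sum_b Im (z b).
Proof. exact: (raddf_sum (@complex.Im R : Rcomplex R -> R)). Qed.

Lemma expm_spectral n m (A : 'M[C]_n) (P : 'I_m -> 'M[C]_n) (x : 'I_m -> R) :
  (forall k, A ^+ k = \sum_b (- 'i * (x b)%:C) ^+ k *: P b) ->
  expm A = \sum_b phase (x b) *: P b.
Proof.
move=> A_pow; apply/matrixP => a c; rewrite /expm /cRe /cIm !mxE summxE.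
have termE k : (A ^+ k) a c / k`!%:R
    = \sum_b (cos_coeff (x b) k -i* sin_coeff (x b) k) * P b a c.
  rewrite A_pow summxE mulr_suml; apply: eq_bigr => b _.
  by rewrite mxE -expNi_coeff mulrAC.
have ReE k : Re ((A ^+ k) a c / k`!%:R) = \sum_b
    (cos_coeff (x b) k * Re (P b a c) + sin_coeff (x b) k * Im (P b a c)).
  by rewrite termE Re_sum; apply: eq_bigr => b _; rewrite Re_mul_subi.
have ImE k : Im ((A ^+ k) a c / k`!%:R) = \sum_b
    (cos_coeff (x b) k * Im (P b a c) + sin_coeff (x b) k * - Re (P b a c)).
  by rewrite termE Im_sum; apply: eq_bigr => b _; rewrite Im_mul_subi mulrN.
apply/eqP; rewrite eq_complex /=; apply/andP; split; apply/eqP.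
- under eq_fun do under eq_bigr do rewrite ReE.
  rewrite Re_sum; under eq_bigr do rewrite mxE Re_phaseM.
  exact/cvg_lim/cvg_sum_cos_sin_series.
- under eq_fun do under eq_bigr do rewrite ImE.
  rewrite Im_sum; under eq_bigr do rewrite mxE Im_phaseM -mulrN.
  exact/cvg_lim/cvg_sum_cos_sin_series.
Qed.

End Phase.

Section PhaseModel.
Variables (R : realType) (n m : nat) (T : 'M[R]_(3, m)) (v : 'I_m -> 'cV[R[i]]_n).
Implicit Types (l : 'rV[R]_3) (j : 'I_3).
Local Notation Re := (@complex.Re R).
Local Notation Im := (@complex.Im R).

Definition phase_model (l : 'rV[R]_3) : 'cV[R[i]]_n :=
  \sum_b phase ((l *m T) 0 b) *: v b.

Lemma mulmx_line l j t b :
  ((l + t *: delta_mx 0 j) *m T) 0 b = (l *m T) 0 b + t * T j b.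
Proof. by rewrite mulmxDl -scalemxAl -rowE !mxE. Qed.

Lemma pderiv_Re_phase_model a l j :
  pderiv (fun x => cRe (phase_model x a 0)) l j
  = \sum_b T j b * Im (phase ((l *m T) 0 b) * v b a 0).
Proof.
rewrite /pderiv /phase_model /cRe.
under eq_fun do rewrite summxE Re_sum.
under eq_fun do under eq_bigr do rewrite mxE mulmx_line.
by apply: derive1_sum => b; apply: is_derive_Re_phaseM.
Qed.

Lemma pderiv_Im_phase_model a l j :
  pderiv (fun x => cIm (phase_model x a 0)) l j
  = \sum_b - (T j b * Re (phase ((l *m T) 0 b) * v b a 0)).
Proof.
rewrite /pderiv /phase_model /cIm.
under eq_fun do rewrite summxE Im_sum.
under eq_fun do under eq_bigr do rewrite mxE mulmx_line.
by apply: derive1_sum => b; apply: is_derive_Im_phaseM.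
Qed.

Lemma cpderiv_phase_model l j :
  cpderiv phase_model l j
  = \sum_b (- 'i * (T j b)%:C * phase ((l *m T) 0 b)) *: v b.
Proof.
apply/matrixP => a c; rewrite ord1 /cpderiv mxE summxE.
rewrite pderiv_Re_phase_model pderiv_Im_phase_model.
apply/eqP; rewrite eq_complex Re_sum Im_sum; apply/andP; split; apply/eqP.
- by apply: eq_bigr => b _; rewrite [(_ *: v b) _ _]mxE -[X in Re X]mulrA Re_mulNiR.
- by apply: eq_bigr => b _; rewrite [(_ *: v b) _ _]mxE -[X in Im X]mulrA Im_mulNiR.
Qed.

Hypothesis v_orth : forall b c, b != c -> braket (v b) (v c) = 0.

Theorem uhlmannD_phase_model l j k : uhlmannD phase_model l j k = 0.
Proof.
rewrite /uhlmannD !cpderiv_phase_model /phase_model !braket_orthogonal_sum //.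
rewrite cIm_real ?mulr0 //.
under eq_bigr do rewrite phaseJ_mul2 conj_Ni_real mul_i_Ni -rmorphM.
under [X in _ - X * _]eq_bigr do rewrite phaseJ_mulr conj_Ni_real -mulrA.
under [X in _ - _ * X]eq_bigr do rewrite phaseJ_mull -mulrA.
rewrite -!mulr_sumr mul_i_Ni.
rewrite rpredB ?rpredM ?rpred_sum // => b _;
  by rewrite rpredM ?real_complex_real ?braket_self_real.
Qed.

End PhaseModel.

Section Bell.
Variable R : realType.
Local Notation C := R[i].

(* [Xmx p q r s] = [[p,0,0,q],[0,r,s,0],[0,s,r,0],[q,0,0,p]]; every [σ_j ⊗ σ_j]
   has this shape. *)
Definition Xmx (p q r s : C) : 'M[C]_(2 * 2) := \matrix_(a, c)
  match nat_of_ord a, nat_of_ord c return C with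
  | 0%N, 0%N | 3%N, 3%N => p | 0%N, 3%N | 3%N, 0%N => q
  | 1%N, 1%N | 2%N, 2%N => r | 1%N, 2%N | 2%N, 1%N => s
  | _, _ => 0 end.

Ltac Xmx_entries :=
  let a := fresh "a" in let c := fresh "c" in
  apply/matrixP => a c; rewrite !mxE ?(big_ord_recl, big_ord0, mxE);
  case: a => [[|[|[|[|?]]]] ?]; last by [];
  (case: c => [[|[|[|[|?]]]] ?]; last by []); rewrite /= ?mxE.

Lemma mulmx_Xmx p q r s p' q' r' s' :
  Xmx p q r s *m Xmx p' q' r' s' =
  Xmx (p * p' + q * q') (p * q' + q * p') (r * r' + s * s') (r * s' + s * r').
Proof. by Xmx_entries; ring. Qed.

Lemma addmx_Xmx p q r s p' q' r' s' :
  Xmx p q r s + Xmx p' q' r' s' = Xmx (p + p') (q + q') (r + r') (s + s').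
Proof. by Xmx_entries; rewrite ?addr0. Qed.

Lemma scalemx_Xmx z p q r s : z *: Xmx p q r s = Xmx (z * p) (z * q) (z * r) (z * s).
Proof. by Xmx_entries; rewrite ?mulr0. Qed.

Lemma Xmx0 : Xmx 0 0 0 0 = 0.
Proof. by Xmx_entries. Qed.

Lemma Xmx1 : Xmx 1 0 1 0 = 1%:M.
Proof. by Xmx_entries. Qed.

Lemma adjmx_Xmx p q r s : adjmx (Xmx p q r s) = Xmx p^* q^* r^* s^*.
Proof. by Xmx_entries; rewrite ?oppr0. Qed.

(* Projectors onto the Bell states Φ+, Φ-, Ψ+, Ψ- in the basis |00>, |01>, |10>, |11>. *)
Definition bellP (b : 'I_4) : 'M[C]_(2 * 2) :=
  let h := 2^-1 in
  match nat_of_ord b with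
  | 0 => Xmx h h 0 0 | 1 => Xmx h (- h) 0 0
  | 2 => Xmx 0 0 h h | _ => Xmx 0 0 h (- h) end.

Lemma bellP_idem b : bellP b *m bellP b = bellP b.
Proof.
case: b => [[|[|[|[|b]]]] ?]; last by [].
all: by rewrite /bellP /= mulmx_Xmx; congr Xmx; field.
Qed.

Lemma bellP_orth b c : b != c -> bellP b *m bellP c = 0.
Proof.
case: b => [[|[|[|[|b]]]] ?]; last by [].
all: case: c => [[|[|[|[|c]]]] ?]; last by [].
all: rewrite // /bellP /= mulmx_Xmx -Xmx0 => _; congr Xmx; ring.
Qed.

Lemma bellP_sum : \sum_b bellP b = 1%:M.
Proof.
rewrite !big_ord_recl big_ord0 addr0 /bellP /= !addmx_Xmx -Xmx1.
by congr Xmx; field.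
Qed.

Lemma adjmx_bellP b : adjmx (bellP b) = bellP b.
Proof.
case: b => [[|[|[|[|b]]]] ?]; last by [].
all: by rewrite /bellP /= adjmx_Xmx ?rmorphN rmorph0 !fmorphV !rmorph_nat.
Qed.

(* [bellT j b] is the eigenvalue of [σ_j ⊗ σ_j] on the Bell state [b]. *)
Definition bellT : 'M[R]_(3, 4) := \matrix_(j, b)
  match nat_of_ord j, nat_of_ord b with
  | 0, 0 | 0, 2 | 1, 1 | 1, 2 | 2, 0 | 2, 1 => 1
  | _, _ => -1 end.

Lemma iCE : iC R = 'i.
Proof. by []. Qed.

Lemma ord3_lift : (lift ord0 ord0 = 1 :> 'I_3) * (lift ord0 (lift ord0 ord0) = 2 :> 'I_3).
Proof. by split; apply: val_inj. Qed.

Lemma Hgen_Xmx (l : 'rV[R]_3) : Hgen l =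
  Xmx (l 0 2)%:C (l 0 0 - l 0 1)%:C (- l 0 2)%:C (l 0 0 + l 0 1)%:C.
Proof.
apply/matrixP => a c; rewrite /Hgen summxE !big_ord_recl big_ord0 !mxE /=.
case: a => [[|[|[|[|a]]]] ?]; last by [].
all: case: c => [[|[|[|[|c]]]] ?]; last by [].
all: rewrite /= !ord3_lift ?iCE ?mulrNN ?mulrN ?mulNr -?expr2 ?sqrCi !complexr0.
all: by rewrite ?rmorphB ?rmorphD ?rmorphN; ring.
Qed.

Lemma Hgen_bell (l : 'rV[R]_3) : Hgen l = \sum_b ((l *m bellT) 0 b)%:C *: bellP b.
Proof.
rewrite Hgen_Xmx !big_ord_recl big_ord0 addr0 /bellP /= !scalemx_Xmx !addmx_Xmx.
rewrite !mxE !big_ord_recl !big_ord0 !mxE /= !ord3_lift.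
by congr Xmx; rewrite ?rmorphD ?rmorphB ?rmorphN ?rmorphM ?rmorphN1; field.
Qed.

Lemma Ulam_bell (l : 'rV[R]_3) :
  Ulam l = \sum_b phase ((l *m bellT) 0 b) *: bellP b.
Proof.
apply: expm_spectral => k; rewrite Hgen_bell iCE scaler_sumr.
under eq_bigr do rewrite scalerA.
exact: (expr_sum_orthogonal_idempotents _ bellP_idem bellP_orth bellP_sum).
Qed.

Lemma braket_bellP_orth (u : 'cV[C]_(2 * 2)) b c :
  b != c -> braket (bellP b *m u) (bellP c *m u) = 0.
Proof.
move=> bc; rewrite braket_mulmxl adjmx_bellP mulmxA bellP_orth // mul0mx.
by rewrite -(scale0r u) braketZr mul0r.
Qed.

End Bell.

Unset Implicit Arguments.

Theorem mainTheorem1 (R : realType) (psi0 : 'cV[complex R]_(2 * 2)) :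
  braket psi0 psi0 = 1 ->
  forall (l : 'rV[R]_3) (j k : 'I_3),
    uhlmannD (fun l' : 'rV[R]_3 => Ulam l' *m psi0) l j k = 0.
Proof.
move=> _ l j k.
have -> : (fun l' => Ulam l' *m psi0) = phase_model (bellT R) (fun b => bellP R b *m psi0).
  apply: funext => l'; rewrite Ulam_bell mulmx_suml.
  by apply: eq_bigr => b _; rewrite -scalemxAl.
exact/uhlmannD_phase_model/braket_bellP_orth.
Qed.
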